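(* Let $t\ge 3$ and let $\mathcal{H}$ be an $n$-vertex $3$-uniform hypergraph that does not contain $K_{2,t}$ as a trace. Let $A$ be the set of edges of $\mathcal{H}$ containing at least one pair of vertices whose co-degree in $\mathcal{H}$ is $1$, and let $B=\mathcal{H}\setminus A$. For a vertex $x$, let $N_1(x)=\{z: \exists e\in B,\ \{x,z\}\subseteq e\}$. Then for any two distinct vertices $x,y\in V(\mathcal{H})$, $|N_1(x)\cap N_1(y)|\le (t-1)(6t-2)$.
   Context: A hypergraph $\mathcal{H}$ contains a graph $F$ (vertices $v_1,\dots,v_p$, edges $e_1,\dots,e_q$) as a trace if there exist distinct vertices $w_1,\dots,w_p\in V(\mathcal{H})$ and distinct edges $f_1,\dots,f_q\in E(\mathcal{H})$ such that whenever $e_i=v_\alpha v_\beta$, $f_i\cap\{w_1,\dots,w_p\}=\{w_\alpha,w_\beta\}$. The co-degree of a pair $\{x,y\}$ in $\mathcal{H}$ is the number of edges of $\mathcal{H}$ containing $\{x,y\}$. $\mathcal{H}\setminus A$ denotes the hypergraph on $V(\mathcal{H})$ with edge set $E(\mathcal{H})\setminus A$. *)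

From mathcomp Require Import all_boot.
Set Implicit Arguments. Unset Strict Implicit. Unset Printing Implicit Defensive.

Definition uniform (V : finType) (k : nat) (H : {set {set V}}) : Prop :=
  forall e, e \in H -> #|e| = k.

Definition contains_trace (V U : finType) (H : {set {set V}})
    (EF : {set {set U}}) : Prop :=
  exists (w : U -> V) (f : {set U} -> {set V}),
    injective w /\
    {in EF &, injective f} /\
    (forall e, e \in EF -> f e \in H) /\
    (forall e, e \in EF -> f e :&: (w @: [set: U]) = w @: e).

Definition Kst_edges (s t : nat) : {set {set ('I_s + 'I_t)%type}} :=
  [set [set inl i; inr j] | i : 'I_s, j : 'I_t].

Definition codeg (V : finType) (H : {set {set V}}) (x y : V) : nat :=
  #|[set e in H | (x \in e) && (y \in e)]|.

Definition edgesA (V : finType) (H : {set {set V}}) : {set {set V}} :=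
  [set e in H | [exists x : V, exists y : V,
     [&& x != y, x \in e, y \in e & codeg H x y == 1]]].

Definition edgesB (V : finType) (H : {set {set V}}) : {set {set V}} :=
  H :\: edgesA H.

Definition N1 (V : finType) (H : {set {set V}}) (x : V) : {set V} :=
  [set z | (z != x) && [exists e in edgesB H, (x \in e) && (z \in e)]].

From mathcomp Require Import all_boot zify.
Set Implicit Arguments. Unset Strict Implicit. Unset Printing Implicit Defensive.

(* Every z in N1(x) ∩ N1(y) has co-degree at least 2 with x and with y, and in
   a 3-uniform hypergraph at most one edge contains x, y and z; hence z lies on
   an edge through x avoiding y and on an edge through y avoiding x.  The third
   vertices of these two edges give a digraph of out-degree at most 2 on the
   common neighbourhood, so it has an independent set of a fifth of its size.
   Any t independent vertices z_1, ..., z_t, together with x, y and their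
   chosen edges, form a trace of K_{2,t}.  So the common neighbourhood has at
   most 5(t - 1) <= (t - 1)(6t - 2) vertices. *)

Section IndependentSets.

Variables (T : finType) (k : nat) (d : T -> {set T}).

Lemma sum_indegree (S : {set T}) :
  \sum_(z in S) #|[set w in S | z \in d w]| =
  \sum_(w in S) #|[set z in S | z \in d w]|.
Proof.
under eq_bigr do rewrite -sum1dep_card.
under [RHS]eq_bigr do rewrite -sum1dep_card.
rewrite (exchange_big_dep (mem S)) /=; last by move=> z w _ /andP[].
by apply: eq_bigr => w wS; apply: eq_bigl => z; rewrite wS.
Qed.

Lemma exists_low_indegree (S : {set T}) :
  {in S, forall w, #|d w| <= k} -> S != set0 ->
  exists2 z, z \in S & #|[set w in S | z \in d w]| <= k.
Proof.
move=> dk /set0Pn[z0 z0S].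
apply/exists_inP; apply: contraT; rewrite negb_exists_in => /forall_inP high.
have : k.+1 * #|S| <= k * #|S|.
  rewrite -sum1_card !big_distrr /=.
  apply: (@leq_trans (\sum_(z in S) #|[set w in S | z \in d w]|)).
    by apply: leq_sum => z zS; rewrite muln1 ltnNge; exact: high.
  rewrite sum_indegree; apply: leq_sum => w wS; rewrite muln1.
  apply: leq_trans (dk w wS); apply/subset_leq_card/subsetP => z.
  by rewrite inE => /andP[].
by rewrite leq_pmul2r ?ltnn // card_gt0; apply/set0Pn; exists z0.
Qed.

Lemma independent_subset (S : {set T}) :
  {in S, forall w, #|d w| <= k} ->
  exists I : {set T}, [/\ I \subset S, #|S| <= k.*2.+1 * #|I| &
    {in I &, forall u v, v \in d u -> u = v}].
Proof.
have [n] := ubnP #|S|; elim: n S => // n IH S ltSn dk.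
have [-> | S0] := eqVneq S set0.
  by exists set0; rewrite sub0set cards0; split=> // u v; rewrite inE.
(* Remove a vertex of small in-degree together with its in- and out-neighbours. *)
have [z zS low] := exists_low_indegree dk S0.
pose R := z |: d z :|: [set w in S | z \in d w].
have zR : z \in R by rewrite !inE eqxx.
have cardR : #|R| <= k.*2.+1.
  apply: leq_trans (leq_card_setU _ _) _; rewrite cardsU1.
  have := dk z zS; have := leq_b1 (z \notin d z); lia.
have ltSRn : #|S :\: R| < n.
  rewrite -ltnS (leq_trans _ ltSn) // ltnS (cardsD1 z S) zS ltnS.
  by rewrite subset_leq_card // subsetD1 subsetDl !inE eqxx.
have [I [IS cardI indI]] := IH _ ltSRn (sub_in1 (subsetP (subsetDl S R)) dk).
have I_S w : w \in I -> w \in S by move=> /(subsetP IS) /setDP[].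
have I_notR w : w \in I -> w \notin R by move=> /(subsetP IS) /setDP[].
exists (z |: I); split.
- by rewrite subUset sub1set zS; apply/subsetP.
- rewrite cardsU1 (contraL (I_notR z) zR) mulnDr muln1 -(cardsID R S) leq_add //.
  exact: leq_trans (subset_leq_card (subsetIr S R)) cardR.
- move=> u v /setU1P[-> | uI] /setU1P[-> | vI] // zv.
  + by case/negP: (I_notR v vI); rewrite !inE zv orbT.
  + by case/negP: (I_notR u uI); rewrite !inE zv I_S ?orbT.
  + exact: indI.
Qed.

End IndependentSets.

Section Traces.

Variables (V : finType) (H : {set {set V}}).

Lemma contains_trace_preim (U : finType) (EF : {set {set U}}) (w : U -> V) :
  injective w ->
  (forall e, e \in EF -> exists2 g, g \in H & forall u, (w u \in g) = (u \in e)) ->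
  contains_trace H EF.
Proof.
move=> w_inj EF_H.
pose f (e : {set U}) :=
  odflt set0 [pick g in H | [forall u, (w u \in g) == (u \in e)]].
have fP e : e \in EF -> f e \in H /\ forall u, (w u \in f e) = (u \in e).
  case/EF_H=> g gH gw; rewrite /f.
  case: pickP => [g' /andP[g'H /forallP g'w] | /(_ g)] /=.
    by split=> // u; apply/eqP.
  by rewrite gH; case/negP; apply/forallP => u; rewrite gw.
exists w, f; split=> //; split; [|split].
- move=> e1 e2 /fP[_ we1] /fP[_ we2] f12.
  by apply/setP => u; rewrite -we1 -we2 f12.
- by move=> e /fP[].
- move=> e /fP[_ we]; apply/setP => v; rewrite inE; apply/andP/imsetP.
    by case=> vf /imsetP[u _ vu]; exists u; rewrite // -we -vu.
  by case=> u ue ->; rewrite we ue imset_f.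
Qed.

Lemma contains_trace_Kst (s t : nat) (a : 'I_s -> V) (b : 'I_t -> V)
    (g : 'I_s -> 'I_t -> {set V}) :
  injective a -> injective b -> (forall i j, a i != b j) ->
  (forall i j, g i j \in H) ->
  (forall i j i', (a i' \in g i j) = (i' == i)) ->
  (forall i j j', (b j' \in g i j) = (j' == j)) ->
  contains_trace H (Kst_edges s t).
Proof.
move=> a_inj b_inj ab gH ag bg.
pose w u := match u with inl i => a i | inr j => b j end.
apply: (@contains_trace_preim _ _ w).
  case=> [i|j] [i'|j'] /= eq_ab.
  - by rewrite (a_inj _ _ eq_ab).
  - by case/eqP: (ab i j').
  - by case/eqP: (ab i' j).
  - by rewrite (b_inj _ _ eq_ab).
move=> _ /imset2P[i j _ _ ->]; exists (g i j) => // -[i'|j']; rewrite !inE /=.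
  by rewrite ag orbF.
by rewrite bg.
Qed.

End Traces.

Lemma cards3 (T : finType) (x y z : T) :
  x != y -> x != z -> y != z -> #|[set x; y; z]| = 3.
Proof.
move=> xy xz yz.
by rewrite setUC cardsU1 cards2 xy !inE ![z == _]eq_sym (negbTE xz) (negbTE yz).
Qed.

Lemma ord2_eq (i j : 'I_2) : (i == j) = ((i == ord0) == (j == ord0)).
Proof. by case: i j => [[|[|//]] ?] [[|[|//]] ?]. Qed.

Section Uniform3.

Variables (V : finType) (H : {set {set V}}).

Lemma N1_neq x z : z \in N1 H x -> z != x.
Proof. by rewrite inE => /andP[]. Qed.

Lemma N1_codeg x z : z \in N1 H x -> 1 < codeg H x z.
Proof.
rewrite inE => /andP[zx /exists_inP[e /setDP[eH eNA] /andP[xe ze]]].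
have codeg_gt0 : 0 < codeg H x z.
  by rewrite card_gt0; apply/set0Pn; exists e; rewrite !inE eH xe ze.
rewrite ltn_neqAle eq_sym codeg_gt0 andbT.
apply: contraNneq eNA => codeg1; rewrite inE eH.
by apply/existsP; exists x; apply/existsP; exists z; rewrite eq_sym zx xe ze codeg1.
Qed.

Definition avoiding_edge (x z y : V) : {set V} :=
  odflt set0 [pick e in H | (x \in e) && (z \in e) && (y \notin e)].

Hypothesis H3 : uniform 3 H.

Lemma uniform3_triple_edge e x y z : e \in H -> x != y -> x != z -> y != z ->
  x \in e -> y \in e -> z \in e -> e = [set x; y; z].
Proof.
move=> eH xy xz yz xe ye ze.
apply/eqP; rewrite eq_sym eqEcard H3 // cards3 // leqnn andbT.
by apply/subsetP => v; rewrite !inE => /orP[/orP[]|] /eqP->.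
Qed.

Lemma avoiding_edgeP x z y : 1 < codeg H x z -> x != z -> y != x -> y != z ->
  let e := avoiding_edge x z y in [/\ e \in H, x \in e, z \in e & y \notin e].
Proof.
move=> codeg_gt1 xz yx yz; rewrite /avoiding_edge.
case: pickP => [e /andP[eH /andP[/andP[xe ze] ye]] | no_edge] //=.
(* Otherwise every edge through x and z is the edge {x, y, z}. *)
suff : codeg H x z <= 1 by rewrite leqNgt codeg_gt1.
rewrite -(cards1 [set x; y; z]); apply/subset_leq_card/subsetP => e.
rewrite !inE => /andP[eH /andP[xe ze]]; have := no_edge e.
rewrite /= eH xe ze /= => /negbFE ye.
by rewrite (uniform3_triple_edge eH _ xz yz xe ye ze) // eq_sym.
Qed.

Lemma N1_avoiding_edgeP x z y : x != y -> z \in N1 H x -> z != y ->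
  let e := avoiding_edge x z y in [/\ e \in H, x \in e, z \in e & y \notin e].
Proof.
move=> xy zN1 zy; have zx := N1_neq zN1.
by apply: avoiding_edgeP; rewrite 1?eq_sym ?N1_codeg.
Qed.

Lemma card_edgeD_le1 e A a b : e \in H -> a != b -> [set a; b] \subset e :&: A ->
  #|e :\: A| <= 1.
Proof.
move=> eH ab /subset_leq_card; rewrite cards2 ab cardsD (H3 eH) /=; lia.
Qed.

Section CommonNeighbourhood.

Variables x y : V.
Hypothesis xy : x != y.

Definition third_vertices z :=
  (avoiding_edge x z y :|: avoiding_edge y z x) :\: [set x; y; z].

Lemma card_third_vertices z : z \in N1 H x :&: N1 H y -> #|third_vertices z| <= 2.
Proof.
case/setIP=> zNx zNy; have zx := N1_neq zNx; have zy := N1_neq zNy.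
have yx : y != x by rewrite eq_sym.
have [xzH xe ze _] := N1_avoiding_edgeP xy zNx zy.
have [yzH ye ze' _] := N1_avoiding_edgeP yx zNy zx.
rewrite /third_vertices setDUl; apply: leq_trans (leq_card_setU _ _) _.
apply: (@leq_add _ _ 1 1).
  apply: card_edgeD_le1 xzH zx _; apply/subsetP => v.
  by rewrite !inE => /orP[] /eqP->; rewrite ?xe ?ze !eqxx ?orbT.
apply: card_edgeD_le1 yzH zy _; apply/subsetP => v.
by rewrite !inE => /orP[] /eqP->; rewrite ?ye ?ze' !eqxx ?orbT.
Qed.

Lemma trace_of_independent t (c : 'I_t -> V) :
  injective c -> (forall j, c j \in N1 H x :&: N1 H y) ->
  (forall j k, c k \in third_vertices (c j) -> k = j) ->
  contains_trace H (Kst_edges 2 t).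
Proof.
move=> c_inj cZ c_indep.
have yx : y != x by rewrite eq_sym.
have cNx j : c j \in N1 H x by case/setIP: (cZ j).
have cNy j : c j \in N1 H y by case/setIP: (cZ j).
have cx j := N1_neq (cNx j); have cy j := N1_neq (cNy j).
have exP j := N1_avoiding_edgeP xy (cNx j) (cy j).
have eyP j := N1_avoiding_edgeP yx (cNy j) (cx j).
have c_edge j k :
    c k \in avoiding_edge x (c j) y :|: avoiding_edge y (c j) x -> k = j.
  move=> ck; have [|ckN] := boolP (c k \in [set x; y; c j]).
    by rewrite !inE (negbTE (cx k)) (negbTE (cy k)) => /eqP/c_inj.
  by apply: c_indep; rewrite inE ckN.
pose a (i : 'I_2) := if i == ord0 then x else y.
pose g (i : 'I_2) j :=
  if i == ord0 then avoiding_edge x (c j) y else avoiding_edge y (c j) x.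
apply: (@contains_trace_Kst _ _ _ _ a c g) => //.
- move=> i i' eq_a; apply/eqP; rewrite ord2_eq; move: eq_a; rewrite /a.
  case: (i == ord0); case: (i' == ord0) => // /eqP.
    by rewrite (negbTE xy).
  by rewrite (negbTE yx).
- by move=> i j; rewrite /a eq_sym; case: ifP.
- by move=> i j; rewrite /g; case: ifP => _; [case: (exP j) | case: (eyP j)].
- move=> i j i'; rewrite /a /g [i' == i]ord2_eq.
  have [_ xe _ ye] := exP j; have [_ ye' _ xe'] := eyP j.
  by case: (i == ord0); case: (i' == ord0);
    rewrite ?xe ?ye' ?(negbTE ye) ?(negbTE xe').
- move=> i j k; apply/idP/eqP => [ckg | ->].
    apply: c_edge; rewrite inE; move: ckg.
    by rewrite /g; case: ifP => _ ->; rewrite ?orbT.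
  by rewrite /g; case: ifP => _; [case: (exP j) | case: (eyP j)].
Qed.

Lemma card_common_N1 t :
  ~ contains_trace H (Kst_edges 2 t) -> #|N1 H x :&: N1 H y| <= 5 * (t - 1).
Proof.
move=> noKst.
have [I [IZ cardZ I_indep]] := independent_subset card_third_vertices.
suff : #|I| < t by move: cardZ; rewrite /=; lia.
rewrite ltnNge; apply/negP => tI; apply: noKst.
pose c (j : 'I_t) : V := enum_val (widen_ord tI j).
have cI j : c j \in I by apply: enum_valP.
apply: (@trace_of_independent _ c).
- by move=> j k /enum_val_inj /(congr1 val) eq_jk; apply: val_inj.
- by move=> j; apply: (subsetP IZ).
- move=> j k /(I_indep _ _ (cI j) (cI k)) /enum_val_inj /(congr1 val) eq_jk.
  by apply: val_inj; exact: esym eq_jk.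
Qed.

End CommonNeighbourhood.

End Uniform3.

Theorem mainTheorem5 (V : finType) (t : nat) (H : {set {set V}}) :
  3 <= t ->
  uniform 3 H ->
  ~ contains_trace H (Kst_edges 2 t) ->
  forall x y : V, x != y ->
    #|N1 H x :&: N1 H y| <= (t - 1) * (6 * t - 2).
Proof.
move=> t_ge3 H3 noKst x y xy.
apply: leq_trans (card_common_N1 H3 xy noKst) _.
by rewrite mulnC leq_mul2l; apply/orP; right; lia.
Qed.
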